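(* In the network model described in the context, let $\pi$ be an admissible cyclic policy and $f_i\in\mathcal{F}$. All packets of flow $f_i$ meet their deadlines under $\pi$ if and only if, for every finite horizon $T$, \[ \max_{0\le t\le T}\ \sum_{e\in\mathcal{T}^{(i)}} Q_{i,e}^{\pi}(t)\le \lambda_i\tau_i . \]
   Context: Network model: a directed graph $G=(V,E)$; time is slotted. Each link $e$ has capacity $c_e$. Interference is described by a conflict graph on the links; $\mathcal{M}$ is the set of feasible activation sets. Flow $f_i$ has a fixed route $\mathcal{T}^{(i)}$, deterministic fluid arrival rate $\lambda_i>0$ (exactly $\lambda_i$ units arrive at the source in each slot $0\le t\le T$), and deadline $\tau_i$: a packet meets its deadline if delivered to its destination within $\tau_i$ slots of its arrival. Each link $e\in\mathcal{T}^{(i)}$ reserves a slice $w_{i,e}$ for $f_i$ with its own first-come-first-served queue, of size $Q_{i,e}(t)$ at the beginning of slot $t$ (all queues initially empty). A policy $\pi$ chooses $\mu^\pi(t)\in\mathcal{M}$ each slot; admissible policies respect interference and are work-conserving (an activated link serves $\min\{Q_{i,e}(t),w_{i,e}\}$ from each slice queue; served units join the next link's queue in the next slot or are delivered at the last link). A policy is cyclic with period $K^\pi$ if $\mu^\pi(t)=\mu^\pi(t+K^\pi)$ for all $t\ge 0$. *)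

From HB Require Import structures.
From mathcomp Require Import all_boot all_order all_algebra.
Set Implicit Arguments. Unset Strict Implicit. Unset Printing Implicit Defensive.
Import Order.TTheory GRing.Theory Num.Theory.
Local Open Scope ring_scope.

Section Model.
Variables (R : realFieldType) (V E : finType).

Definition is_route (src dst : E -> V) (r : seq E) : bool :=
  if r is e0 :: r' then path (fun e e' => dst e == src e') e0 r' && uniq r
  else false.

Definition feasible (conflict : rel E) : {set {set E}} :=
  [set S : {set E} | [forall e in S, forall e' in S, ~~ conflict e e']].

Definition admissible (conflict : rel E) (mu : nat -> {set E}) : Prop :=
  forall t, mu t \in feasible conflict.

Definition cyclic (mu : nat -> {set E}) : Prop :=
  exists K : nat, (0 < K)%N /\ forall t, mu (t + K)%N = mu t.

(* Q t e is the size of the slice queue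
   of the flow at link e at the beginning of slot t (0 for e not on r).
   In slot t an activated link e of the route serves min(Q t e, w e)
   (work conservation); served units join the next link's queue at slot
   t+1; the lam units arriving at the source during slot t join the queue
   of the first link at slot t+1. *)
Fixpoint Qf (r : seq E) (lam : R) (w : E -> R) (mu : nat -> {set E})
    (t : nat) (e : E) {struct t} : R :=
  match t with
  | 0 => 0
  | t'.+1 =>
      let q := Qf r lam w mu t' in
      let srv f := if (f \in r) && (f \in mu t') then Num.min (q f) (w f) else 0 in
      if e \in r then
        q e - srv e + (if index e r == 0%N then lam else srv (nth e r (index e r).-1))
      else 0
  end.

Definition served (r : seq E) (lam : R) (w : E -> R) (mu : nat -> {set E})
    (t : nat) (e : E) : R :=
  if (e \in r) && (e \in mu t) then Num.min (Qf r lam w mu t e) (w e) else 0.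

Definition delivered (r : seq E) (lam : R) (w : E -> R) (mu : nat -> {set E})
    (t : nat) : R :=
  if r is e0 :: r' then served r lam w mu t (last e0 r') else 0.

Definition Dcum (r : seq E) (lam : R) (w : E -> R) (mu : nat -> {set E})
    (d : nat) : R :=
  \sum_(s < d.+1) delivered r lam w mu s.

(* Fluid FCFS: the fluid unit at cumulative position x in (lam*s, lam*(s+1)]
   arrived in slot s, and (queues being FCFS along the tandem route) it is
   delivered in the first slot d with x <= Dcum d.  It meets its deadline
   tau iff it is delivered within tau slots of its arrival, i.e. some
   d <= s + tau has x <= Dcum d. *)
Definition meets_deadlines (r : seq E) (lam : R) (tau : nat) (w : E -> R)
    (mu : nat -> {set E}) : Prop :=
  forall (s : nat) (x : R), lam * s%:R < x -> x <= lam * (s.+1)%:R ->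
    exists d : nat, (d <= s + tau)%N /\ x <= Dcum r lam w mu d.

End Model.

From HB Require Import structures.
From mathcomp Require Import all_boot all_order all_algebra lra.
Import Order.TTheory GRing.Theory Num.Theory.
Set Implicit Arguments. Unset Strict Implicit. Unset Printing Implicit Defensive.
Local Open Scope ring_scope.

(* Conservation of fluid along the route: the total backlog of the flow at the
   start of slot t is lam t - D t, where D t is the amount delivered in slots
   before t.  By FCFS the units arriving in slot s all meet their deadline iff
   the last of them, at cumulative position lam (s + 1), has been delivered by
   slot s + tau, i.e. lam (s + 1) <= D (s + tau + 1); with t = s + tau + 1 this
   is exactly backlog t <= lam tau, and for t <= tau the bound is trivial. *)

Section Backlog.
Variables (R : realFieldType) (E : finType) (e0 : E) (r' : seq E) (lam : R)
  (w : E -> R) (mu : nat -> {set E}).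
Let r := e0 :: r'.
Hypothesis lam_ge0 : 0 <= lam.
Hypothesis w_ge0 : forall e, e \in r -> 0 <= w e.
Hypothesis r_uniq : uniq r.

Definition inflow t e :=
  if index e r == 0%N then lam else served r lam w mu t (nth e0 r (index e r).-1).

Lemma QfS t e : e \in r ->
  Qf r lam w mu t.+1 e = Qf r lam w mu t e - served r lam w mu t e + inflow t e.
Proof.
move=> er; rewrite -[LHS]/(if e \in r then _ else _) er /inflow /served.
have lt_pred : ((index e r).-1 < size r)%N.
  by rewrite (leq_ltn_trans (leq_pred _)) ?index_mem.
by case: ifP => // _; rewrite !(set_nth_default e0 e lt_pred).
Qed.

Lemma Qf_ge0 t e : 0 <= Qf r lam w mu t e.
Proof.
elim: t e => [|t IH] e //.
have served_ge0 f : 0 <= served r lam w mu t f.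
  by rewrite /served; case: ifP => // /andP[f_r _]; rewrite le_min IH w_ge0.
have [er | /negbTE nr] := boolP (e \in r); last first.
  by rewrite -[Qf _ _ _ _ _ e]/(if e \in r then _ else _) nr.
rewrite QfS // addr_ge0 //; last by rewrite /inflow; case: ifP.
by rewrite subr_ge0 /served er; case: ifP => //; rewrite ge_min lexx.
Qed.

Lemma served_ge0 t e : 0 <= served r lam w mu t e.
Proof. by rewrite /served; case: ifP => // /andP[er _]; rewrite le_min Qf_ge0 w_ge0. Qed.

Lemma delivered_ge0 t : 0 <= delivered r lam w mu t.
Proof. exact: served_ge0. Qed.

Lemma sum_served t :
  \sum_(e <- r) served r lam w mu t e =
  \sum_(0 <= k < size r') served r lam w mu t (nth e0 r k) + delivered r lam w mu t.
Proof. by rewrite (big_nth e0) big_nat_recr //= /delivered (last_nth e0). Qed.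

Lemma sum_inflow t :
  \sum_(e <- r) inflow t e =
  lam + \sum_(0 <= k < size r') served r lam w mu t (nth e0 r k).
Proof.
rewrite (big_nth e0).
under eq_big_nat => k /andP[_ lt_k] do rewrite /inflow index_uniq //.
by rewrite big_nat_recl.
Qed.

Lemma sum_Qf_succ t :
  \sum_(e <- r) Qf r lam w mu t.+1 e =
  \sum_(e <- r) Qf r lam w mu t e + lam - delivered r lam w mu t.
Proof.
rewrite big_seq (eq_bigr _ (@QfS t)) -big_seq !big_split /= sumrN.
by rewrite sum_served sum_inflow /delivered /=; lra.
Qed.

Lemma sum_Qf t :
  \sum_(e <- r) Qf r lam w mu t e = lam * t%:R - \sum_(s < t) delivered r lam w mu s.
Proof.
elim: t => [|t IH]; first by rewrite big1 // big_ord0 mulr0 subr0.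
by rewrite sum_Qf_succ IH big_ord_recr /= -natr1 mulrDr mulr1; lra.
Qed.

End Backlog.

Section DeadlineBacklog.
Variables (R : realFieldType) (lam : R) (tau : nat) (D : nat -> R).
Hypothesis lam_gt0 : 0 < lam.
Hypothesis D0 : D 0 = 0.
Hypothesis D_homo : {homo D : m n / (m <= n)%N >-> m <= n}.

Lemma deadlines_iff_backlog_le :
  (forall (s : nat) (x : R), lam * s%:R < x -> x <= lam * s.+1%:R ->
     exists d : nat, (d <= s + tau)%N /\ x <= D d.+1) <->
  (forall t : nat, lam * t%:R - D t <= lam * tau%:R).
Proof.
split=> [on_time t | backlog_le s x _ le_x].
- have D_ge0 : 0 <= D t by rewrite -D0 D_homo.
  have [le_t_tau | lt_tau_t] := leqP t tau.
    have : lam * t%:R <= lam * tau%:R by rewrite ler_pM2l // ler_nat.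
    lra.
  have {lt_tau_t} -> : t = ((t - tau.+1).+1 + tau)%N by rewrite addSn -addnS subnK.
  set s := (t - tau.+1)%N.
  have lt_s_s1 : lam * s%:R < lam * s.+1%:R by rewrite ltr_pM2l // ltr_nat.
  have [d [le_d lam_le_D]] := on_time s _ lt_s_s1 (lexx _).
  have : D d.+1 <= D (s.+1 + tau)%N by rewrite D_homo // addSn ltnS.
  rewrite natrD mulrDr; lra.
- exists (s + tau)%N; split=> //.
  have := backlog_le (s + tau).+1.
  rewrite -addSn natrD mulrDr; lra.
Qed.

End DeadlineBacklog.

Theorem corollary2 (R : realFieldType) (V E F : finType)
    (src dst : E -> V) (c : E -> R) (conflict : rel E)
    (route : F -> seq E) (lam : F -> R) (tau : F -> nat) (w : F -> E -> R)
    (Hconf_sym : symmetric conflict) (Hconf_irr : irreflexive conflict)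
    (Hroute : forall j, is_route src dst (route j))
    (Hlam : forall j, 0 < lam j)
    (Hw : forall j e, e \in route j -> 0 <= w j e)
    (Hcap : forall e, \sum_(j | e \in route j) w j e <= c e)
    (mu : nat -> {set E})
    (Hadm : admissible conflict mu) (Hcyc : cyclic mu)
    (i : F) :
  meets_deadlines (route i) (lam i) (tau i) (w i) mu <->
  (forall T : nat, forall t : nat, (t <= T)%N ->
     \sum_(e <- route i) Qf (route i) (lam i) (w i) mu t e <= lam i * (tau i)%:R).
Proof.
have lam_gt0 := Hlam i; move: (Hroute i) (Hw i).
case: (route i) => [|e0 r'] // /andP[_ r_uniq] w_ge0.
pose D t := \sum_(s < t) delivered (e0 :: r') (lam i) (w i) mu s.
have D_homo : {homo D : m n / (m <= n)%N >-> m <= n}.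
  apply: homo_leq => [//|m n p|t]; first exact: le_trans.
  by rewrite /D big_ord_recr lerDl delivered_ge0 // ltW.
have D0 : D 0 = 0 by rewrite /D big_ord0.
apply: (iff_trans (deadlines_iff_backlog_le (tau i) lam_gt0 D0 D_homo)).
split=> [backlog_le T t _ | backlog_le t]; first by rewrite sum_Qf.
by rewrite -sum_Qf // (backlog_le t).
Qed.
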